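(* Let $\mathcal{X}$ and $\mathcal{Y}$ be probability distributions over a finite set $\Theta$ with $D_{KL}(\mathcal{X}\|\mathcal{Y})\le\kappa$, and let $f:\Theta\to[0,1]$. If $\mathbb{E}_{x\sim\mathcal{X}}[f(x)]=1-\delta$, then $\mathbb{E}_{y\sim\mathcal{Y}}[f(y)]\ge(\delta^\delta e^{-\kappa})^{\frac{1}{1-\delta}}(1-\delta)$.
   Context: $D_{KL}(\mathcal{X}\|\mathcal{Y})=\sum_{\theta\in\mathrm{supp}(\mathcal{X})}\mathcal{X}(\theta)\log(\mathcal{X}(\theta)/\mathcal{Y}(\theta))$ with natural logarithm (it is $\infty$ if $\mathcal{Y}(\theta)=0$ for some $\theta\in\mathrm{supp}(\mathcal{X})$). Conventions: $0^0=1$, and when $\delta=1$ the expression $(\delta^\delta e^{-\kappa})^{\frac{1}{1-\delta}}(1-\delta)$ is defined to be $0$. *)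

From mathcomp Require Import all_boot all_order all_algebra.
From mathcomp Require Import reals.
From mathcomp.analysis Require Import sequences exp.
Set Implicit Arguments. Unset Strict Implicit. Unset Printing Implicit Defensive.
Import Order.TTheory GRing.Theory Num.Theory.
Local Open Scope ring_scope.

Definition is_distr (R : realType) (T : finType) (P : T -> R) : Prop :=
  (forall t, 0 <= P t) /\ \sum_(t : T) P t = 1.

Definition expect (R : realType) (T : finType) (P : T -> R) (f : T -> R) : R :=
  \sum_(t : T) P t * f t.

(* D_KL(X||Y) <= kappa, where D_KL is extended-real valued: it is +oo iff
   Y t = 0 for some t in supp X; otherwise it is the finite sum over supp X
   of X t * ln (X t / Y t) (natural log). *)
Definition KL_le (R : realType) (T : finType) (X Y : T -> R) (kappa : R) : Prop :=
  (forall t, X t != 0 -> Y t != 0) /\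
  \sum_(t : T | X t != 0) X t * ln (X t / Y t) <= kappa.

(* (delta^delta e^{-kappa})^{1/(1-delta)} (1-delta), defined to be 0 when
   delta = 1; powR has 0 `^ 0 = 1. *)
Definition kl_bound (R : realType) (delta kappa : R) : R :=
  if delta == 1 then 0
  else ((delta `^ delta) * expR (- kappa)) `^ (1 - delta)^-1 * (1 - delta).

From mathcomp Require Import all_boot all_order all_algebra.
From mathcomp Require Import interval_inference reals.
From mathcomp.analysis Require Import sequences exp.
From mathcomp Require Import ring lra.
Set Implicit Arguments. Unset Strict Implicit. Unset Printing Implicit Defensive.
Import Order.TTheory GRing.Theory Num.Theory.
Local Open Scope ring_scope.

(* Donsker-Varadhan: for every a > 0 on the support of X, E_X[ln a] - kappa
   <= ln E_Y[a]; it follows from Jensen's inequality for ln.  Testing it with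
   a = delta + (p / q) f, where p = E_X[f] and q = E_Y[f], makes E_Y[a] = 1,
   and concavity of ln in the value of f then yields the binary divergence
   bound p ln (p / q) + delta ln delta <= kappa, which is the claim after
   exponentiation. *)

Section Logarithm.
Variable R : realType.

Lemma ln_le_subr1 (x : R) : 0 < x -> ln x <= x - 1.
Proof. by move=> x0; have := @le_ln1Dx R (x - 1); rewrite subrKC; apply; lra. Qed.

Lemma convex_sum_gt0 (I : finType) (P : pred I) (w a : I -> R) :
  (forall i, P i -> 0 <= w i) -> \sum_(i | P i) w i = 1 ->
  (forall i, P i -> 0 < a i) -> 0 < \sum_(i | P i) w i * a i.
Proof.
move=> w0 w1 a0; have wa0 i : P i -> 0 <= w i * a i.
  by move=> Pi; rewrite mulr_ge0 ?w0 ?ltW ?a0.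
rewrite lt_def sumr_ge0 // andbT; apply/eqP => /(psumr_eq0P wa0) wa_eq0.
suff : \sum_(i | P i) w i = 0 by rewrite w1 => /eqP; rewrite oner_eq0.
apply: big1 => i Pi; apply/eqP.
by have /eqP := wa_eq0 i Pi; rewrite mulf_eq0 (gt_eqF (a0 i Pi)) orbF.
Qed.

Lemma jensen_ln (I : finType) (P : pred I) (w a : I -> R) :
  (forall i, P i -> 0 <= w i) -> \sum_(i | P i) w i = 1 ->
  (forall i, P i -> 0 < a i) ->
  \sum_(i | P i) w i * ln (a i) <= ln (\sum_(i | P i) w i * a i).
Proof.
move=> w0 w1 a0; have W0 := convex_sum_gt0 w0 w1 a0.
set W := \sum_(i | P i) w i * a i in W0 *.
rewrite -subr_le0 -[ln W]mul1r -w1 mulr_suml -sumrB.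
apply: le_trans (_ : \sum_(i | P i) w i * (a i / W - 1) <= 0).
  apply: ler_sum => i Pi; rewrite -mulrBr ler_wpM2l ?w0 //.
  by rewrite -ln_div ?posrE ?a0 // ln_le_subr1 // divr_gt0 ?a0.
rewrite (eq_bigr (fun i => w i * a i / W - w i)); last first.
  by move=> i _; rewrite mulrBr mulr1 mulrA.
by rewrite sumrB -mulr_suml -/W divff ?gt_eqF // w1 subrr.
Qed.

Lemma powR_self (x : R) : 0 <= x -> x `^ x = expR (x * ln x).
Proof.
by rewrite le_eqVlt => /predU1P[<-|x0]; rewrite ?powRr0 ?mul0r ?expR0 // /powR gt_eqF.
Qed.

Lemma kl_bound_le (delta kappa q : R) : 0 <= delta < 1 -> 0 < q ->
  (1 - delta) * ln ((1 - delta) / q) + delta * ln delta <= kappa ->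
  kl_bound delta kappa <= q.
Proof.
move=> /andP[d0 d1] q0; rewrite /kl_bound lt_eqF //.
set p := 1 - delta; have p0 : 0 < p by rewrite subr_gt0.
rewrite powR_self // -expRD -expRM -ler_pdivlMr // -[q / p]lnK ?posrE ?divr_gt0 //.
rewrite ler_expR ler_pdivrMr // !ln_div ?posrE //.
nra.
Qed.

End Logarithm.

Section Expectation.
Variables (R : realType) (T : finType).
Implicit Types (X Y f g : T -> R).

Lemma expect_supp X g : expect X g = \sum_(t | X t != 0) X t * g t.
Proof. by rewrite /expect [RHS]big_rmcond // => t /negPn/eqP ->; rewrite mul0r. Qed.

Lemma expect_ge0 X f : (forall t, 0 <= X t) -> (forall t, 0 <= f t) ->
  0 <= expect X f.
Proof. by move=> X0 f0; apply: sumr_ge0 => t _; rewrite mulr_ge0. Qed.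

Lemma expect_le1 X f : is_distr X -> (forall t, f t <= 1) -> expect X f <= 1.
Proof.
move=> [X0 X1] f1; rewrite -X1; apply: ler_sum => t _.
by rewrite -[leRHS]mulr1 ler_wpM2l.
Qed.

Lemma expect_affine X f (u v : R) : \sum_t X t = 1 ->
  expect X (fun t => u * f t + v) = u * expect X f + v.
Proof.
move=> X1; rewrite /expect mulr_sumr -[in RHS](mul1r v) -X1 mulr_suml.
by rewrite -big_split /=; apply: eq_bigr => t _; ring.
Qed.

Lemma expect_gt0_abscont X Y f : (forall t, 0 <= Y t) ->
  (forall t, X t != 0 -> Y t != 0) -> (forall t, 0 <= f t) ->
  0 < expect X f -> 0 < expect Y f.
Proof.
move=> Y0 XY f0 /gt_eqF/negbT pX0; rewrite lt_def expect_ge0 // andbT.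
move: pX0; apply: contra => /eqP qY0; apply/eqP/big1 => t _.
have [-> |/XY/negbTE Yt] := eqVneq (X t) 0; first by rewrite mul0r.
have /eqP := psumr_eq0P (fun t _ => mulr_ge0 (Y0 t) (f0 t)) qY0 (i := t) isT.
by rewrite mulf_eq0 Yt => /eqP ->; rewrite mulr0.
Qed.

Lemma expect_eq1_supp X f : is_distr X -> (forall t, f t <= 1) ->
  expect X f = 1 -> forall t, X t != 0 -> f t = 1.
Proof.
move=> [X0 X1] f1 p1 t Xt.
have := expect_affine f (-1) 1 X1; rewrite p1 mulN1r addNr.
have Xf1_ge0 s : true -> 0 <= X s * (-1 * f s + 1).
  by move=> _; rewrite mulr_ge0 // mulN1r addrC subr_ge0.
move=> /(psumr_eq0P Xf1_ge0)/(_ t isT)/eqP.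
by rewrite mulf_eq0 (negbTE Xt) /= mulN1r addrC subr_eq0 => /eqP <-.
Qed.

Lemma donsker_varadhan X Y (a : T -> R) (kappa : R) :
  is_distr X -> (forall t, 0 <= Y t) -> KL_le X Y kappa ->
  (forall t, 0 <= a t) -> (forall t, X t != 0 -> 0 < a t) ->
  expect X (fun t => ln (a t)) - kappa <= ln (expect Y a).
Proof.
move=> [X0 X1] Y0 [XY KL] a0 a_gt0.
have X_gt0 t : X t != 0 -> 0 < X t by move=> Xt; rewrite lt_def Xt X0.
have Y_gt0 t : X t != 0 -> 0 < Y t by move=> Xt; rewrite lt_def XY // Y0.
pose b t := Y t * a t / X t.
have b_gt0 t : X t != 0 -> 0 < b t.
  by move=> Xt; rewrite divr_gt0 ?mulr_gt0 ?X_gt0 ?Y_gt0 ?a_gt0.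
have X1_supp : \sum_(t | X t != 0) X t = 1.
  by rewrite big_rmcond // => t /negPn/eqP.
have lnb t : X t != 0 -> X t * ln (b t) = X t * ln (a t) - X t * ln (X t / Y t).
  move=> Xt; rewrite -mulrBr -ln_div ?posrE ?divr_gt0 ?a_gt0 ?X_gt0 ?Y_gt0 //.
  by congr (_ * ln _); rewrite /b; field; rewrite gt_eqF ?X_gt0 ?Y_gt0.
have Xb t : X t != 0 -> X t * b t = Y t * a t.
  by move=> Xt; rewrite /b mulrC divfK ?gt_eqF ?X_gt0.
have Ya_supp : \sum_(t | X t != 0) Y t * a t <= expect Y a.
  rewrite /expect [leRHS](bigID (fun t => X t != 0)) /= lerDl.
  by apply: sumr_ge0 => t _; rewrite mulr_ge0.
have Ya_supp_gt0 : 0 < \sum_(t | X t != 0) Y t * a t.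
  by rewrite -(eq_bigr _ Xb) convex_sum_gt0.
apply: le_trans (_ : ln (\sum_(t | X t != 0) Y t * a t) <= _); last first.
  by rewrite ler_ln ?posrE // (lt_le_trans Ya_supp_gt0).
rewrite -(eq_bigr _ Xb); apply: le_trans (jensen_ln _ X1_supp b_gt0) => //.
rewrite expect_supp (eq_bigr _ lnb) sumrB lerB //.
Qed.

Lemma binary_kl_le X Y f (kappa : R) :
  is_distr X -> is_distr Y -> KL_le X Y kappa -> (forall t, 0 <= f t <= 1) ->
  0 < expect X f ->
  expect X f * ln (expect X f / expect Y f)
    + (1 - expect X f) * ln (1 - expect X f) <= kappa.
Proof.
move=> hX [Y0 Y1] hK hf p_gt0; have [X0 X1] := hX; have [XY _] := hK.
have f0 t : 0 <= f t by case/andP: (hf t).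
have f1 t : f t <= 1 by case/andP: (hf t).
have q_gt0 := expect_gt0_abscont Y0 XY f0 p_gt0.
set p := expect X f in p_gt0 *; set q := expect Y f in q_gt0 *.
set d := 1 - p; pose r := p / q; pose a t := r * f t + d.
have d_ge0 : 0 <= d by rewrite subr_ge0 expect_le1.
have r_gt0 : 0 < r by rewrite divr_gt0.
have a_ge0 t : 0 <= a t by rewrite /a addr_ge0 // mulr_ge0 // ltW.
have [a_gt0 ln_a] : (forall t, X t != 0 -> 0 < a t) /\
    forall t, X t != 0 -> f t * ln (r + d) + (1 - f t) * ln d <= ln (a t).
  have [d0|d_gt0] := eqVneq d 0.
    (* p = 1, so f = 1 on the support of X: no concavity is needed at the
       endpoint d = 0, where ln is not the logarithm. *)
    have p1 : p = 1 by move: d0; rewrite /d; lra.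
    have f_eq1 := expect_eq1_supp hX f1 p1.
    by split=> t /f_eq1 ft1; rewrite /a ft1 d0 mulr1 addr0 // subrr mul0r addr0 mul1r.
  have {}d_gt0 : 0 < d by rewrite lt_def d_gt0.
  split=> t _; first exact: ltr_wpDl (mulr_ge0 (ltW r_gt0) (f0 t)) d_gt0.
  have -> : a t = f t * (r + d) + (1 - f t) * d by rewrite /a; ring.
  exact: (concave_ln (Itv01 (f0 t) (f1 t)) (addr_gt0 r_gt0 d_gt0) d_gt0).
have Ea : expect Y a = 1 by rewrite expect_affine // /r divfK ?gt_eqF // subrKC.
have DV := donsker_varadhan hX Y0 hK a_ge0 a_gt0; rewrite Ea ln1 subr_le0 in DV.
apply: le_trans DV; apply: le_trans (_ : p * ln (r + d) + d * ln d <= _).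
  by rewrite lerD2r ler_pM2l // ler_ln ?posrE ?lerDl // ltr_wpDr.
have -> : p * ln (r + d) + d * ln d = expect X (fun t => (ln (r + d) - ln d) * f t + ln d).
  by rewrite expect_affine // -/p /d; ring.
apply: ler_sum => t _; have [->|Xt] := eqVneq (X t) 0; first by rewrite !mul0r.
by rewrite ler_wpM2l // (le_trans _ (ln_a t Xt)) //; lra.
Qed.

End Expectation.

Theorem lemma5p2 (R : realType) (T : finType) (X Y : T -> R) (kappa delta : R)
  (f : T -> R) :
  is_distr X -> is_distr Y -> KL_le X Y kappa ->
  (forall t, 0 <= f t <= 1) ->
  expect X f = 1 - delta ->
  kl_bound delta kappa <= expect Y f.
Proof.
move=> hX hY hK hf p_eq; have [X0 _] := hX; have [Y0 _] := hY; have [XY _] := hK.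
have f0 t : 0 <= f t by case/andP: (hf t).
have f1 t : f t <= 1 by case/andP: (hf t).
have [->|d_neq1] := eqVneq delta 1; first by rewrite /kl_bound eqxx expect_ge0.
have p_gt0 : 0 < expect X f.
  by rewrite lt_def expect_ge0 // andbT p_eq subr_eq0 eq_sym.
have d_ge0 : 0 <= delta by have := expect_le1 hX f1; lra.
apply: kl_bound_le; first by rewrite d_ge0 /=; lra.
  exact: expect_gt0_abscont Y0 XY f0 p_gt0.
by have := binary_kl_le hX hY hK hf p_gt0; rewrite p_eq subKr.
Qed.
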